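(* Let $\{c_n\}_{n\ge1}$ be a real sequence with $\sum_{n=1}^\infty (c_n)^2<+\infty$ and $\sum_{n=N}^\infty (c_n)^2>0$ for every $N\ge1$. If $$\lim_{N\to\infty}\frac{(c_N)^2}{\sum_{n=N}^\infty (c_n)^2}=0,$$ then $$\lim_{N\to\infty}\frac{\sup_{n\ge N}(c_n)^2}{\sum_{n=N}^\infty (c_n)^2}=0.$$ *)

From Stdlib Require Import Reals.
From Coquelicot Require Import Coquelicot.
Open Scope R_scope.

Definition tail_sq (c : nat -> R) (N : nat) : R :=
  Series (fun k => (c (N + k)%nat) ^ 2).

Definition tail_sup_sq (c : nat -> R) (N : nat) : Rbar :=
  Lub_Rbar (fun x => exists n : nat, (N <= n)%nat /\ x = (c n) ^ 2).

From Stdlib Require Import Reals Lra Lia.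
From Coquelicot Require Import Coquelicot.
Open Scope R_scope.

(* The tails [T N = tail_sq c N] decrease in [N], so for [n >= N] we have
   [c n ^ 2 = (c n ^ 2 / T n) * T n <= (c n ^ 2 / T n) * T N].  Hence
   [sup_{n >= N} c n ^ 2 / T N <= sup_{n >= N} c n ^ 2 / T n], which tends to 0. *)

Lemma is_lim_seq_0_eventually_le (u : nat -> R) :
  (forall eps : posreal, exists N, forall n, (N <= n)%nat -> 0 <= u n <= eps) ->
  is_lim_seq u 0.
Proof.
  intros Hu. apply is_lim_seq_spec. intros eps.
  assert (Heps2 : 0 < eps / 2) by (destruct eps; simpl; lra).
  destruct (Hu (mkposreal _ Heps2)) as [N HN]. exists N. intros n Hn.
  specialize (HN n Hn). simpl in HN.
  rewrite Rminus_0_r, Rabs_pos_eq by lra.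
  destruct eps; simpl in *; lra.
Qed.

Lemma tail_sup_sq_le (c : nat -> R) (N : nat) (B : R) :
  (forall n, (N <= n)%nat -> c n ^ 2 <= B) ->
  is_finite (tail_sup_sq c N) /\ 0 <= real (tail_sup_sq c N) <= B.
Proof.
  intros HB. unfold tail_sup_sq.
  set (E := fun x => exists n : nat, (N <= n)%nat /\ x = c n ^ 2).
  destruct (Lub_Rbar_correct E) as [Hub Hlub].
  assert (Hle : Rbar_le (Lub_Rbar E) B).
  { apply Hlub. intros x [n [Hn ->]]. apply HB, Hn. }
  assert (Hge : Rbar_le (c N ^ 2) (Lub_Rbar E)).
  { apply Hub. exists N. split; [lia | reflexivity]. }
  pose proof (pow2_ge_0 (c N)).
  destruct (Lub_Rbar E); simpl in *; try contradiction.
  split; [reflexivity | lra].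
Qed.

Section Tails.

Variable c : nat -> R.
Hypothesis c_sq_summable : ex_series (fun k => c (1 + k)%nat ^ 2).

Lemma ex_series_tail_sq (N : nat) : ex_series (fun k => c (N + k)%nat ^ 2).
Proof.
  apply (ex_series_incr_n (fun k => c k ^ 2)).
  apply ex_series_incr_1, c_sq_summable.
Qed.

Lemma tail_sq_ge0 (N : nat) : 0 <= tail_sq c N.
Proof.
  unfold tail_sq.
  replace 0 with (Series (fun k => 0 * c (N + k)%nat ^ 2))
    by (rewrite Series_scal_l; ring).
  apply Series_le; [| apply ex_series_tail_sq].
  intros k. rewrite Rmult_0_l. split; [lra | apply pow2_ge_0].
Qed.

Lemma tail_sq_S (N : nat) : tail_sq c N = c N ^ 2 + tail_sq c (S N).
Proof.
  unfold tail_sq. rewrite Series_incr_1 by apply ex_series_tail_sq.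
  rewrite Nat.add_0_r. f_equal.
  apply Series_ext. intros k. do 2 f_equal. lia.
Qed.

Lemma tail_sq_decr (N M : nat) : (N <= M)%nat -> tail_sq c M <= tail_sq c N.
Proof.
  induction 1 as [| M _ IH]; [lra |].
  rewrite tail_sq_S in IH. pose proof (pow2_ge_0 (c M)). lra.
Qed.

Lemma sq_le_tail_sq (N n : nat) : (N <= n)%nat -> c n ^ 2 <= tail_sq c N.
Proof.
  intros Hn. pose proof (tail_sq_decr N n Hn) as Hdecr.
  rewrite tail_sq_S in Hdecr. pose proof (tail_sq_ge0 (S n)). lra.
Qed.

Lemma sq_le_ratio_mul_tail_sq (N n : nat) : (N <= n)%nat -> 0 < tail_sq c n ->
  c n ^ 2 <= c n ^ 2 / tail_sq c n * tail_sq c N.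
Proof.
  intros Hn Hpos.
  assert (Hratio : 0 <= c n ^ 2 / tail_sq c n).
  { apply Rdiv_le_0_compat; [apply pow2_ge_0 | exact Hpos]. }
  replace (c n ^ 2) with (c n ^ 2 / tail_sq c n * tail_sq c n) at 1 by (field; lra).
  apply Rmult_le_compat_l; [exact Hratio | apply tail_sq_decr, Hn].
Qed.

End Tails.

Theorem lemma2p5 (c : nat -> R) :
  ex_series (fun k => (c (1 + k)%nat) ^ 2) ->
  (forall N : nat, (1 <= N)%nat -> tail_sq c N > 0) ->
  is_lim_seq (fun N => (c N) ^ 2 / tail_sq c N) 0 ->
  (forall N : nat, (1 <= N)%nat -> is_finite (tail_sup_sq c N)) /\
  is_lim_seq (fun N => real (tail_sup_sq c N) / tail_sq c N) 0.
Proof.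
  intros Hsum Hpos Hlim. split.
  - intros N _. apply (tail_sup_sq_le c N (tail_sq c N)), sq_le_tail_sq, Hsum.
  - apply is_lim_seq_0_eventually_le. intros eps.
    apply is_lim_seq_spec in Hlim. destruct (Hlim eps) as [N0 HN0].
    exists (max N0 1). intros N HN.
    assert (HposN : 0 < tail_sq c N) by (apply Hpos; lia).
    assert (Hsup : forall n, (N <= n)%nat -> c n ^ 2 <= eps * tail_sq c N).
    { intros n Hn.
      assert (Hratio : c n ^ 2 / tail_sq c n <= eps).
      { specialize (HN0 n ltac:(lia)). rewrite Rminus_0_r in HN0.
        pose proof (Rle_abs (c n ^ 2 / tail_sq c n)). lra. }
      eapply Rle_trans.
      - apply (sq_le_ratio_mul_tail_sq c Hsum N n Hn). apply Hpos. lia.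
      - apply Rmult_le_compat_r; lra. }
    destruct (tail_sup_sq_le c N _ Hsup) as [_ Hbound].
    split.
    + apply Rdiv_le_0_compat; lra.
    + apply Rle_div_l; lra.
Qed.
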